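(* Let $(u_n)_{n\in\mathbb N}$ be a nondecreasing sequence in $\{0,1\}$ and put $v_n=u_n+1$. In Martin-Löf's sequent calculus for ordinals, let $a=\mathrm S(\underline{u_n})_{n\in\mathbb N}$ and $b=\mathrm S(\underline{v_n})_{n\in\mathbb N}$. Then the sequent consisting of the single atomic formula $a<b$ is provable.
   Context: Martin-Löf's system: ordinals are inductively generated by the rule that for every finite or infinite sequence $u=(u_0,u_1,\dots)$ of ordinals (possibly empty), $\mathrm S(u)$ is an ordinal. $\underline 0$ is $\mathrm S$ of the empty sequence, $\mathrm{succ}(a)$ is $\mathrm S$ of the one-element sequence $(a)$, and $\underline{k+1}=\mathrm{succ}(\underline k)$. Atomic formulae are $a<b$ and $a\le b$ for ordinals $a,b$. A sequent is a finite set $\Gamma$ of atomic formulae (intuitively their classical disjunction); provable sequents are generated inductively by the two rules: from $\Gamma, a\le u_n$ for some index $n$ of $u$, infer $\Gamma, a<\mathrm S(u)$; from $\Gamma, u_n<b$ for every index $n$ of $u$, infer $\Gamma,\mathrm S(u)\le b$ (in particular $\Gamma,\mathrm S(\text{empty})\le b$ is provable). Here ''$\Gamma,\varphi$'' denotes $\Gamma\cup\{\varphi\}$. *)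

From Stdlib Require Import List Arith.
Import ListNotations.

Inductive arity : Type := Fin (n : nat) | Inf.

Definition idx (k : arity) : Type :=
  match k with
  | Fin n => {i : nat | i < n}
  | Inf => nat
  end.

Inductive ord : Type := S (k : arity) (u : idx k -> ord).

Definition empty_fun (A : Type) : idx (Fin 0) -> A :=
  fun i => match Nat.nlt_0_r _ (proj2_sig i) with end.

Definition ord0 : ord := S (Fin 0) (empty_fun ord).
Definition succ (a : ord) : ord := S (Fin 1) (fun _ => a).
Fixpoint num (k : nat) : ord :=
  match k with
  | O => ord0
  | Datatypes.S k => succ (num k)
  end.

Inductive atom : Type := Lt (a b : ord) | Le (a b : ord).

(* A sequent is a finite set of atoms, represented by a list up to
   set equality.  [same_set D (phi :: G)] means D = G ∪ {phi}. *)
Definition same_set (D E : list atom) : Prop := forall x, In x D <-> In x E.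

Inductive provable : list atom -> Prop :=
  | rule_lt (G D : list atom) (a : ord) (k : arity) (u : idx k -> ord) (n : idx k) :
      provable (Le a (u n) :: G) ->
      same_set D (Lt a (S k u) :: G) ->
      provable D
  | rule_le (G D : list atom) (b : ord) (k : arity) (u : idx k -> ord) :
      (forall n : idx k, provable (Lt (u n) b :: G)) ->
      same_set D (Le (S k u) b :: G) ->
      provable D.

(* The sequent {a < b} asks for an index c with a <= v_c, i.e. u_m < u_c + 1 for all m:
   the sequence u must attain its maximum, which cannot be decided.  Since sequents are
   disjunctions, the formula a < b may be kept in every premise: start with any candidate
   c, and whenever some u_m exceeds u_c, reuse a < b to switch to the candidate m.  The
   values of the candidates strictly increase below the bound, so the derivation is
   well founded. *)
From Stdlib Require Import List Arith Lia.
Import ListNotations.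

Lemma same_set_cons_in (x : atom) (G : list atom) : In x G -> same_set G (x :: G).
Proof.
  intros Hx y; split; simpl; [tauto|].
  intros [<-|Hy]; assumption.
Qed.

Lemma provable_lt (G : list atom) (a : ord) (k : arity) (u : idx k -> ord) (n : idx k) :
  provable (Le a (u n) :: G) -> provable (Lt a (S k u) :: G).
Proof.
  intro H; apply (rule_lt G _ a k u n H).
  intro x; tauto.
Qed.

Lemma provable_le (G : list atom) (b : ord) (k : arity) (u : idx k -> ord) :
  (forall n, provable (Lt (u n) b :: G)) -> provable (Le (S k u) b :: G).
Proof.
  intro H; apply (rule_le G _ b k u H).
  intro x; tauto.
Qed.

Lemma provable_lt_keep (G : list atom) (a : ord) (k : arity) (u : idx k -> ord) (n : idx k) :
  In (Lt a (S k u)) G -> provable (Le a (u n) :: G) -> provable G.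
Proof.
  intros Hin H.
  exact (rule_lt G G a k u n H (same_set_cons_in _ _ Hin)).
Qed.

Lemma provable_lt_succ (G : list atom) (a b : ord) :
  provable (Le a b :: G) -> provable (Lt a (succ b) :: G).
Proof. exact (provable_lt G a (Fin 1) (fun _ => b) (exist _ 0 Nat.lt_0_1)). Qed.

Lemma provable_le_num (G : list atom) (i j : nat) :
  i <= j -> provable (Le (num i) (num j) :: G).
Proof.
  revert j; induction i as [|i IH]; intros j Hij.
  - apply provable_le; intros [m Hm]; lia.
  - destruct j as [|j]; [lia|].
    apply provable_le; intros _.
    apply provable_lt_succ, IH; lia.
Qed.

Lemma provable_lt_num (G : list atom) (i j : nat) :
  i < j -> provable (Lt (num i) (num j) :: G).
Proof.
  destruct j as [|j]; [lia|]; intro Hij.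
  apply provable_lt_succ, provable_le_num; lia.
Qed.

Section BoundedSup.

Variables (k : arity) (u : idx k -> nat) (B : nat).
Hypothesis u_bounded : forall n, u n <= B.

Let a : ord := S k (fun n => num (u n)).
Let b : ord := S k (fun n => num (u n + 1)).

Lemma provable_le_candidate (G : list atom) (c : idx k) :
  In (Lt a b) G -> provable (Le a (num (u c + 1)) :: G).
Proof.
  remember (B - u c) as d eqn:Hd; revert G c Hd.
  induction d as [d IH] using lt_wf_ind; intros G c Hd Hin.
  apply provable_le; intro m.
  destruct (le_lt_dec (u m) (u c)) as [Hmc|Hcm].
  - apply provable_lt_num; lia.
  - apply (provable_lt_keep _ a k (fun n => num (u n + 1)) m); [right; exact Hin|].
    apply (IH (B - u m)); [specialize (u_bounded m); lia | reflexivity | right; exact Hin].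
Qed.

Theorem provable_lt_sup_succ (c : idx k) : provable [Lt a b].
Proof.
  apply (provable_lt_keep _ a k (fun n => num (u n + 1)) c); [left; reflexivity|].
  apply provable_le_candidate; left; reflexivity.
Qed.

End BoundedSup.

Theorem lemma5p4 (u : nat -> nat)
  (hu01 : forall n, u n <= 1)
  (hmono : forall m n, m <= n -> u m <= u n) :
  provable [Lt (S Inf (fun n : idx Inf => num (u n)))
               (S Inf (fun n : idx Inf => num (u n + 1)))].
Proof.
  exact (provable_lt_sup_succ Inf u 1 hu01 0).
Qed.
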